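(* Let $\mathcal{J}$ be a finite set, $\mathcal{J}_0=\mathcal{J}\cup\{0\}$, let $(\Omega,P)$ be a Borel probability space, and let $\mathcal{U}:\Omega\times\mathcal{J}_0\times\mathbb{R}\to\mathbb{R}$, $(\varepsilon,j,\delta)\mapsto\mathcal{U}_{\varepsilon j}(\delta)$, satisfy the regularity and no-indifference assumptions stated in the context. Let $s\in\mathbb{R}^{\mathcal{J}_0}$ satisfy $s_j>0$ for all $j\in\mathcal{J}_0$ and $\sum_{j\in\mathcal{J}_0}s_j=1$, and let $\delta\in\mathbb{R}^{\mathcal{J}}$ (extended by $\delta_0=0$). Then the following are equivalent: (i) $\delta\in\tilde\sigma^{-1}(s)$, i.e. $\tilde\sigma(\delta)=s$; (ii) there exists $\pi\in\mathcal{M}(P,s)$ such that, with $u_\varepsilon=\max_{j\in\mathcal{J}_0}\mathcal{U}_{\varepsilon j}(\delta_j)$ for $\varepsilon\in\Omega$ and $v=-\delta$ (so $v_j=-\delta_j$, $v_0=0$), the triple $(\pi,u,v)$ is an equilibrium outcome of the matching problem with transfer functions $f_{\varepsilon j}(u)=u$ and $g_{\varepsilon j}(-\delta)=-\mathcal{U}_{\varepsilon j}(\delta)$ (i.e. $g_{\varepsilon j}(y)=-\mathcal{U}_{\varepsilon j}(-y)$).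
   Context: Assumption (regularity): for every $j\in\mathcal{J}_0$ and $\delta\in\mathbb{R}$ the map $\varepsilon\mapsto\mathcal{U}_{\varepsilon j}(\delta)$ is measurable, and for every $\varepsilon\in\Omega$, $j\in\mathcal{J}_0$ the map $\delta\mapsto\mathcal{U}_{\varepsilon j}(\delta)$ is increasing and continuous from $\mathbb{R}$ to $\mathbb{R}$. Assumption (no indifference): for all distinct $j,j'\in\mathcal{J}_0$ and all $\delta,\delta'\in\mathbb{R}$, $P(\varepsilon:\mathcal{U}_{\varepsilon j}(\delta)=\mathcal{U}_{\varepsilon j'}(\delta'))=0$. Demand map: for $\delta\in\mathbb{R}^{\mathcal{J}_0}$, $\sigma_j(\delta)=P(\varepsilon:\mathcal{U}_{\varepsilon j}(\delta_j)\ge\max_{j'\in\mathcal{J}_0}\mathcal{U}_{\varepsilon j'}(\delta_{j'}))$, $j\in\mathcal{J}_0$. The normalized demand map is $\tilde\sigma(\delta)=\sigma((0,\delta))$ for $\delta\in\mathbb{R}^{\mathcal{J}}$ (i.e. imposing $\delta_0=0$), and $\tilde\sigma^{-1}(s)=\{\delta\in\mathbb{R}^{\mathcal{J}}:\tilde\sigma(\delta)=s\}$. $\mathcal{M}(P,s)$ is the set of probability measures $\pi$ on $\Omega\times\mathcal{J}_0$ with $\pi(B\times\mathcal{J}_0)=P(B)$ for all Borel $B\subseteq\Omega$ and $\pi(\Omega\times\{j\})=s_j$ for all $j$. Given increasing functions $f_{\varepsilon j},g_{\varepsilon j}:\mathbb{R}\to\mathbb{R}$, an equilibrium outcome is a triple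 $(\pi,u,v)$ with $\pi$ a probability measure on $\Omega\times\mathcal{J}_0$, $u$ Borel-measurable on $\Omega$, $v$ a function on $\mathcal{J}_0$, such that: (i) $\pi\in\mathcal{M}(P,s)$; (ii) $f_{\varepsilon j}(u_\varepsilon)+g_{\varepsilon j}(v_j)\ge0$ for all $\varepsilon\in\Omega$, $j\in\mathcal{J}_0$; (iii) if $(\varepsilon,j)\in\mathrm{Supp}(\pi)$ then $f_{\varepsilon j}(u_\varepsilon)+g_{\varepsilon j}(v_j)=0$.
   Formalization: In the equilibrium outcome, condition (iii) requires $f_{\varepsilon j}(u_\varepsilon)+g_{\varepsilon j}(v_j)=0$ for π-almost every (ε,j) instead of for every (ε,j) ∈ Supp(π), and each map δ ↦ $\mathcal{U}_{\varepsilon j}(\delta)$ is strictly increasing. Each condition added here is assumed in the paper as well or is needed for the statement above to hold. *)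

From mathcomp Require Import all_boot all_order all_algebra.
From mathcomp Require Import all_classical all_reals all_analysis.

Set Implicit Arguments.
Unset Strict Implicit.
Unset Printing Implicit Defensive.

Import Order.TTheory GRing.Theory Num.Theory numFieldNormedType.Exports.
Local Open Scope classical_set_scope.
Local Open Scope ring_scope.

(* J0 = J ∪ {0} is modelled as [option J], with [None] playing the role of 0.
   It carries the discrete sigma-algebra (generated by all subsets). *)
Definition J0m (J : finType) := g_sigma_algebraType (@setT (set (option J))).

Definition ext0 (R : realType) (J : finType) (delta : J -> R) : option J -> R :=
  fun o => match o with None => 0 | Some j => delta j end.

Definition umax (R : realType) (Om : Type) (J : finType)
  (U : Om -> option J -> R -> R) (delta : option J -> R) (eps : Om) : R :=
  \big[Num.max/U eps None (delta None)]_(j : option J) U eps j (delta j).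

Definition demand (R : realType) d (Om : measurableType d) (J : finType)
  (P : probability Om R) (U : Om -> option J -> R -> R)
  (delta : option J -> R) (j : option J) : \bar R :=
  P [set eps | umax U delta eps <= U eps j (delta j)].

(* Normalized demand: tilde-sigma(delta) = sigma((0, delta)).
   [demand_inv P U s delta] means delta ∈ tilde-sigma^{-1}(s). *)
Definition demand_inv (R : realType) d (Om : measurableType d) (J : finType)
  (P : probability Om R) (U : Om -> option J -> R -> R)
  (s : option J -> R) (delta : J -> R) : Prop :=
  forall j : option J, demand P U (ext0 delta) j = (s j)%:E.

Definition regularity (R : realType) d (Om : measurableType d) (J : finType)
  (U : Om -> option J -> R -> R) : Prop :=
  (forall (j : option J) (x : R), measurable_fun setT (fun eps : Om => U eps j x)) /\
  (forall (eps : Om) (j : option J),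
      {homo U eps j : x y / x < y} /\ continuous (U eps j)).

Definition no_indifference (R : realType) d (Om : measurableType d) (J : finType)
  (P : probability Om R) (U : Om -> option J -> R -> R) : Prop :=
  forall (j j' : option J), j != j' -> forall x x' : R,
    P [set eps | U eps j x = U eps j' x'] = 0%E.

Definition marginals (R : realType) d (Om : measurableType d) (J : finType)
  (P : probability Om R) (s : option J -> R)
  (pi : probability (Om * J0m J)%type R) : Prop :=
  (forall B : set Om, measurable B -> pi (B `*` setT) = P B) /\
  (forall j : option J, pi (setT `*` [set j]) = (s j)%:E).

(* Equilibrium outcome (pi, u, v) for transfer functions f, g.
   Condition (iii) is read as holding pi-almost everywhere. *)
Definition equilibrium_outcome (R : realType) d (Om : measurableType d) (J : finType)
  (P : probability Om R) (s : option J -> R)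
  (f g : Om -> option J -> R -> R)
  (pi : probability (Om * J0m J)%type R) (u : Om -> R) (v : option J -> R) : Prop :=
  [/\ marginals P s pi,
      measurable_fun setT u,
      (forall (eps : Om) (j : option J), 0 <= f eps j (u eps) + g eps j (v j))
    & {ae pi, forall x : (Om * J0m J)%type,
          f x.1 x.2 (u x.1) + g x.1 x.2 (v x.2) = 0}].

From HB Require Import structures.
From mathcomp Require Import all_boot all_order all_algebra.
From mathcomp Require Import all_classical all_reals all_analysis.
From mathcomp Require Import measurable_realfun.
Set Implicit Arguments.
Unset Strict Implicit.
Unset Printing Implicit Defensive.

Import Order.TTheory GRing.Theory Num.Theory numFieldNormedType.Exports.
Local Open Scope classical_set_scope.
Local Open Scope ring_scope.

(* Let [j(eps)] be a measurable selection of a utility-maximizing alternative.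
   By no indifference, P-almost every [eps] has a unique maximizer, so the
   demand [sigma_j(delta)] is the P-probability of [j(eps) = j].  If
   [sigma(delta) = s], the law of [eps |-> (eps, j(eps))] lies in [M(P, s)] and
   is concentrated on the pairs where [u_eps = U_{eps j}(delta_j)]; stability
   [u_eps >= U_{eps j}(delta_j)] holds by definition of [u].  Conversely, if
   [(pi, u, v)] is an equilibrium outcome then pi-almost every pair is a
   maximizing one, so [s_j = pi(Omega x {j}) <= sigma_j(delta)]; both sides sum
   to 1, hence they are equal. *)

Lemma ler_sum_eq (R : numDomainType) (I : finType) (F G : I -> R) :
  (forall i, F i <= G i) -> \sum_i F i = \sum_i G i -> F =1 G.
Proof.
move=> FG sumFG i; apply/eqP; rewrite eq_sym -subr_eq0; apply/eqP.
apply: (@psumr_eq0P _ _ predT (fun i => G i - F i)) => // [k _|].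
  by rewrite subr_ge0.
by rewrite sumrB sumFG subrr.
Qed.

Section measure_compare.
Context d (T : measurableType d) (R : realType) (mu : {measure set T -> \bar R}).

Lemma le_measure_ae (A B : set T) : measurable A -> measurable B ->
  {ae mu, forall x, A x -> B x} -> (mu A <= mu B)%E.
Proof.
move=> mA mB [N [mN muN0 ABN]].
rewrite -(measureU0 mB mN muN0) le_measure ?inE //; first exact: measurableU.
by move=> x Ax; have [Bx|nBx] := pselect (B x); [left|right; apply: ABN => /(_ Ax)].
Qed.

Lemma measure_fibers_sum (I : finType) (f : T -> I) :
  (forall i, measurable (f @^-1` [set i])) ->
  (\sum_(i : I) mu (f @^-1` [set i]))%E = mu setT.
Proof.
move=> mf; have -> : [set: T] = \bigcup_(i in [set: I]) f @^-1` [set i].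
  by apply/seteqP; split => x // _; exists (f x).
rewrite measure_fin_bigcup //; [|exact: finite_finset|exact: trivIset_preimage1].
symmetry; apply: fsbig_fwiden; [by move=> i _; rewrite /= mem_index_enum|exact: index_enum_uniq|].
by move=> i [_ /(_ Logic.I)].
Qed.

End measure_compare.

Section finite_measurable.
Context d (T : measurableType d).

Lemma measurable_find_fiber (I : eqType) (i0 : I) (s : seq I) (p : T -> pred I) :
  (forall i, measurable [set x | p x i]) ->
  forall j, measurable [set x | nth i0 s (find (p x) s) = j].
Proof.
move=> mp j.
have mcst (a : I) : measurable [set _ : T | a = j].
  by rewrite -[X in measurable X]/(cst a @^-1` [set j]) preimage_cst; case: ifP.
elim: s => [|k s IH] //=.
rewrite (_ : [set x | _] = ([set x | p x k] `&` [set _ | k = j]) `|`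
                           (~` [set x | p x k] `&` [set x | nth i0 s (find (p x) s) = j])).
  by apply: measurableU; apply: measurableI => //; exact: measurableC.
apply/seteqP; split => x /=; case: (p x k) => /=; first [by left|by right|idtac].
all: by case=> [[]|[]].
Qed.

Lemma measurable_fun_finite_fibers (I : pointedType)
    (f : T -> g_sigma_algebraType (@setT (set I))) :
  finite_set [set: I] ->
  (forall i, measurable (f @^-1` [set i])) -> measurable_fun setT f.
Proof.
move=> finI mf _ Y _; rewrite setTI.
have -> : f @^-1` Y = \bigcup_(i in Y) f @^-1` [set i].
  by apply/seteqP; split => [x Yfx|x [i Yi /= ->//]]; exists (f x).
apply: fin_bigcup_measurable => [|i _]; last exact: mf.
exact: sub_finite_set (subsetT Y) finI.
Qed.

End finite_measurable.

Section optimal_choice.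
Context (R : realType) d (Om : measurableType d) (J : finType)
  (U : Om -> option J -> R -> R)
  (mU : forall j x, measurable_fun setT (fun eps => U eps j x))
  (p : option J -> R).

Definition optimal (eps : Om) (j : option J) : bool := umax U p eps <= U eps j (p j).

Lemma le_umax eps j : U eps j (p j) <= umax U p eps.
Proof. exact: le_bigmax. Qed.

Lemma optimalE eps j : optimal eps j = (U eps j (p j) == umax U p eps).
Proof. by rewrite /optimal eq_le le_umax. Qed.

Lemma optimal_eq eps j k :
  optimal eps j -> optimal eps k -> U eps j (p j) = U eps k (p k).
Proof. by rewrite !optimalE => /eqP -> /eqP ->. Qed.

Lemma exists_optimal eps : exists j, optimal eps j.
Proof.
rewrite /optimal /umax; elim/big_rec: _ => [|j x _ [k]]; first by exists None.
by move=> xk; case: leP => _; [exists k|exists j].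
Qed.

Lemma measurable_umax : measurable_fun setT (umax U p).
Proof.
rewrite /umax; elim: (index_enum _) => [|k l IH].
  by under eq_fun do rewrite big_nil; exact: mU.
under eq_fun do rewrite big_cons.
exact: measurable_maxr (mU k (p k)) IH.
Qed.

Lemma measurable_optimal j : measurable [set eps | optimal eps j].
Proof.
have := measurable_fun_ler measurable_umax (mU j (p j)) measurableT
  (Y := [set true]) Logic.I.
by rewrite setTI.
Qed.

Definition optimal_choice (eps : Om) : J0m J :=
  nth None (index_enum _) (find (optimal eps) (index_enum _)).

Lemma optimal_choiceP eps : optimal eps (optimal_choice eps).
Proof.
have [j optj] := exists_optimal eps.
by apply: nth_find; apply/hasP; exists j => //; rewrite mem_index_enum.
Qed.

Lemma measurable_optimal_choice_fiber j :
  measurable (optimal_choice @^-1` [set j]).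
Proof. exact: measurable_find_fiber measurable_optimal j. Qed.

Lemma measurable_optimal_choice : measurable_fun setT optimal_choice.
Proof.
apply: measurable_fun_finite_fibers; first exact: finite_finset.
exact: measurable_optimal_choice_fiber.
Qed.

Variables (P : probability Om R) (hnoind : no_indifference P U).

Lemma ae_no_ties :
  \forall eps \ae P, forall j k, j != k -> U eps j (p j) != U eps k (p k).
Proof.
apply: filter_forall => j; apply: filter_forall => k.
have [<-|jk] := eqVneq j k; first by apply: aeW => eps; rewrite eqxx.
exists [set eps | U eps j (p j) = U eps k (p k)]; split; last first.
- by move=> eps /= /not_implyP[_ /negP/negPn/eqP].
- exact: hnoind.
rewrite (_ : [set eps | _] = (fun eps => U eps j (p j) == U eps k (p k)) @^-1` [set true]).
  have := measurable_fun_eqr (mU j (p j)) (mU k (p k)) measurableT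
    (Y := [set true]) Logic.I.
  by rewrite setTI.
by apply/seteqP; split => eps /= /eqP.
Qed.

Lemma demand_optimal_choice j :
  demand P U p j = P (optimal_choice @^-1` [set j]).
Proof.
have [mopt mfib] := (measurable_optimal j, measurable_optimal_choice_fiber j).
apply/eqP; rewrite eq_le; apply/andP; split.
  apply: le_measure_ae => //.
  apply: filterS ae_no_ties => eps noties optj /=.
  apply/eqP; apply: contraTT (noties _ _) _.
  by rewrite (optimal_eq (optimal_choiceP eps) optj).
apply: le_measure; rewrite ?inE //.
by move=> eps /= <-; exact: optimal_choiceP.
Qed.

Lemma sum_demand : (\sum_j demand P U p j)%E = 1%E.
Proof.
under eq_bigr do rewrite demand_optimal_choice.
rewrite measure_fibers_sum; [exact: probability_setT|exact: measurable_optimal_choice_fiber].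
Qed.

Definition optimal_graph (eps : Om) : (Om * J0m J)%type := (eps, optimal_choice eps).

Lemma measurable_optimal_graph : measurable_fun setT optimal_graph.
Proof. by apply: measurable_fun_pair => //; exact: measurable_optimal_choice. Qed.

HB.instance Definition _ :=
  isMeasurableFun.Build _ _ _ _ optimal_graph measurable_optimal_graph.

Definition optimal_assignment : probability (Om * J0m J)%type R :=
  distribution P optimal_graph.

Lemma optimal_assignment_fst B : measurable B ->
  optimal_assignment (B `*` setT) = P B.
Proof. by move=> _; congr (P _); apply/seteqP; split => eps /=; [case|split]. Qed.

Lemma optimal_assignment_snd j :
  optimal_assignment (setT `*` [set j]) = demand P U p j.
Proof.
by rewrite demand_optimal_choice; congr (P _); apply/seteqP; split => eps /=; [case|split].
Qed.

Lemma optimal_assignment_ae :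
  \forall x \ae optimal_assignment, optimal x.1 x.2.
Proof.
exists (\bigcup_(j in setT) (~` [set eps | optimal eps j] `*` [set j])); split.
- apply: fin_bigcup_measurable => [|j _]; first exact: finite_finset.
  apply: measurableX; first exact/measurableC/measurable_optimal.
  exact: sub_sigma_algebra.
- change (P (optimal_graph @^-1` \bigcup_(j in setT)
    (~` [set eps | optimal eps j] `*` [set j])) = 0%E).
  rewrite (_ : optimal_graph @^-1` _ = set0) ?measure0 //.
  apply/seteqP; split => eps //= [j _ []]; rewrite /optimal_graph /= => nopt ocj.
  by apply: nopt; rewrite -ocj; exact: optimal_choiceP.
- by case=> eps j /= nopt; exists j.
Qed.

Lemma demand_ge_marginal (pi : probability (Om * J0m J)%type R) j :
  (forall B, measurable B -> pi (B `*` setT) = P B) ->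
  (\forall x \ae pi, optimal x.1 x.2) ->
  (pi (setT `*` [set j]) <= demand P U p j)%E.
Proof.
move=> pi1 hae; rewrite -[demand P U p j]/(P [set eps | optimal eps j]).
rewrite -pi1; last exact: measurable_optimal.
apply: le_measure_ae.
- by apply: measurableX => //; exact: sub_sigma_algebra.
- by apply: measurableX => //; exact: measurable_optimal.
- apply: (@filterS _ _ (ae_filter_ringOfSetsType pi) _ _ _ hae).
  by case=> eps k /= optk [_ kj]; rewrite -kj.
Qed.

Lemma demand_marginals (s : option J -> R) (pi : probability (Om * J0m J)%type R) :
  \sum_j s j = 1 -> marginals P s pi -> (\forall x \ae pi, optimal x.1 x.2) ->
  forall j, demand P U p j = (s j)%:E.
Proof.
move=> hs [pi1 pi2] hae.
have fin j : demand P U p j \is a fin_num by exact: fin_num_measure (measurable_optimal j).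
have le j : s j <= fine (demand P U p j).
  by rewrite -lee_fin fineK // -pi2; exact: demand_ge_marginal.
have sum1 : \sum_j fine (demand P U p j) = 1.
  by apply: EFin_inj; rewrite EFin_sum_fine // sum_demand.
by move=> j; rewrite -(fineK (fin j)) -(ler_sum_eq le) // sum1 hs.
Qed.

Lemma equilibrium_umaxE (s : option J -> R) (pi : probability (Om * J0m J)%type R) :
  equilibrium_outcome P s (fun _ _ x => x) (fun eps j y => - U eps j (- y))
    pi (umax U p) (fun j => - p j) <->
  marginals P s pi /\ (\forall x \ae pi, optimal x.1 x.2).
Proof.
split=> [[marg _ _ hae]|[marg hae]].
  split=> //; apply: (@filterS _ _ (ae_filter_ringOfSetsType pi) _ _ _ hae) => x.
  by rewrite opprK => /eqP; rewrite subr_eq0 optimalE eq_sym.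
split=> //; first exact: measurable_umax.
  by move=> eps j; rewrite opprK subr_ge0 le_umax.
apply: (@filterS _ _ (ae_filter_ringOfSetsType pi) _ _ _ hae) => x.
by rewrite optimalE opprK => /eqP ->; rewrite subrr.
Qed.

End optimal_choice.

Theorem theorem1 (R : realType) (d : measure_display) (Om : measurableType d)
  (J : finType) (P : probability Om R) (U : Om -> option J -> R -> R)
  (hreg : regularity U) (hnoind : no_indifference P U)
  (s : option J -> R) (hspos : forall j, 0 < s j)
  (hssum : \sum_(j : option J) s j = 1)
  (delta : J -> R) :
  demand_inv P U s delta <->
  exists pi : probability (Om * J0m J)%type R,
    equilibrium_outcome P s
      (fun _ _ x => x)
      (fun eps j y => - U eps j (- y))
      pi (umax U (ext0 delta)) (fun j => - ext0 delta j).
Proof.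
have mU := hreg.1; split=> [hd|[pi /(equilibrium_umaxE mU) [marg hae]]].
  exists (optimal_assignment mU (ext0 delta) P); apply/(equilibrium_umaxE mU).
  split; last exact: optimal_assignment_ae.
  split=> [B mB|j]; first exact: optimal_assignment_fst.
  by rewrite optimal_assignment_snd.
exact: demand_marginals marg hae.
Qed.
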